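(* Let $(\mu,b)$ be a stable configuration under perfect observability for the objective game $G$, with aggregate outcome $\varphi_{\mu,b}$. Then for each $i\in N$, every $\bar\theta_i\in\operatorname{supp}\mu_i$ and every $\theta\in\operatorname{supp}\mu$, $$\Pi_{\bar\theta_i}(\mu;b)=\pi_i(b(\theta))=\pi_i(\varphi_{\mu,b}).$$
   Context: Objective game: $G=(N,A,\pi)$ is a finite $n$-player normal-form game, $N=\{1,\dots,n\}$, finite action sets $A_i$, $A=\prod_{i\in N}A_i$, material payoff (fitness) functions $\pi_i:A\to\mathbb{R}$, extended multilinearly to mixed profiles in $\prod_{i}\Delta(A_i)$ and linearly to correlated strategies: $\pi_i(\varphi)=\sum_{a\in A}\varphi(a)\pi_i(a)$ for $\varphi\in\Delta(A)$; $\pi=(\pi_1,\dots,\pi_n)$. Preference types: $\Theta=\mathbb{R}^A$ (utility functions on $A$, extended multilinearly to mixed profiles). $\mathcal{M}(\Theta^n)$ is the set of product distributions $\mu=\mu_1\times\dots\times\mu_n$ on $\Theta^n$ with each $\mu_i$ finitely supported; $\operatorname{supp}\mu=\prod_i\operatorname{supp}\mu_i$, $\mu(\theta)=\prod_i\mu_i(\theta_i)$, $\mu_{-i}(\theta_{-i})=\prod_{j\neq i}\mu_j(\theta_j)$. Mutants: for nonempty $J\subseteq N$, a mutant sub-profile is $\tilde\theta_J\in\prod_{j\in J}(\Theta\setminus\operatorname{supp}\mu_j)$ with shares $\varepsilon=(\varepsilon_j)_{j\in J}\in(0,1)^{|J|}$, $\|\varepsilon\|=\max_j\varepsilon_j$;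 the post-entry distribution $\tilde\mu^\varepsilon$ has $\tilde\mu^\varepsilon_i=(1-\varepsilon_i)\mu_i+\varepsilon_i\delta_{\tilde\theta_i}$ for $i\in J$ and $\tilde\mu^\varepsilon_i=\mu_i$ otherwise. Perfect observability: for $\mu\in\mathcal M(\Theta^n)$, an equilibrium is a map $b:\operatorname{supp}\mu\to\prod_i\Delta(A_i)$ such that for each $\theta$, $b(\theta)$ is a Nash equilibrium of the normal-form game with action sets $A_i$ and payoffs $\theta_1,\dots,\theta_n$; $B_1(\mu)$ is the set of these; $(\mu,b)$ with $b\in B_1(\mu)$ is a configuration. Its aggregate outcome is $\varphi_{\mu,b}\in\Delta(A)$, $\varphi_{\mu,b}(a)=\sum_{\theta\in\operatorname{supp}\mu}\mu(\theta)\prod_{i}b_i(\theta)(a_i)$. Average fitness of $\theta_i\in\operatorname{supp}\mu_i$: $\Pi_{\theta_i}(\mu;b)=\sum_{\theta'_{-i}\in\operatorname{supp}\mu_{-i}}\mu_{-i}(\theta'_{-i})\pi_i(b(\theta_i,\theta'_{-i}))$. $(\mu,b)$ is balanced if for each $i$ all types in $\operatorname{supp}\mu_i$ have equal average fitness. Focal set: $B_1(\tilde\mu^\varepsilon;b)=\{\tilde b\in B_1(\tilde\mu^\varepsilon):\tilde b(\theta)=b(\theta)\ \forall\theta\in\operatorname{supp}\mu\}$. $(\mu,b)$ is stable if it is balanced and for every nonempty $J\subseteq N$ and every mutant sub-profile $\tilde\theta_J$ there is $\bar\epsilon\in(0,1)$ such that for every $\varepsilon\in(0,1)^{|J|}$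 with $\|\varepsilon\|<\bar\epsilon$ and every $\tilde b\in B_1(\tilde\mu^\varepsilon;b)$, either (i) there is $j\in J$ with $\Pi_{\theta_j}(\tilde\mu^\varepsilon;\tilde b)>\Pi_{\tilde\theta_j}(\tilde\mu^\varepsilon;\tilde b)$ for all $\theta_j\in\operatorname{supp}\mu_j$, or (ii) for every $i\in N$ all types in $\operatorname{supp}\tilde\mu^\varepsilon_i$ have equal average fitness under $(\tilde\mu^\varepsilon,\tilde b)$. *)

(* Payoffs/utilities take values in an arbitrary real closed
   field R (the paper's case is R = the reals). *)
From HB Require Import structures.
From mathcomp Require Import all_boot all_order all_algebra.
Set Implicit Arguments. Unset Strict Implicit. Unset Printing Implicit Defensive.
Import Order.TTheory GRing.Theory Num.Theory.
Local Open Scope ring_scope.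

Section Evo.
Variables (R : rcfType) (n : nat) (A : 'I_n -> finType).

Definition prof := {dffun forall i : 'I_n, A i}.
Definition Theta := {ffun prof -> R}.
Definition tprof := {ffun 'I_n -> Theta}.
(* mixed strategy profiles: sigma i is a (candidate) element of Delta(A_i) *)
Definition mixed := forall i : 'I_n, A i -> R.

Definition is_mixed (i : 'I_n) (t : A i -> R) : Prop :=
  (forall a, 0 <= t a) /\ \sum_(a : A i) t a = 1.

Definition ext (u : prof -> R) (sg : mixed) : R :=
  \sum_(a : prof) (\prod_(i < n) sg i (a i)) * u a.

Definition ext_dev (u : prof -> R) (sg : mixed) (i : 'I_n) (t : A i -> R) : R :=
  \sum_(a : prof) (t (a i) * \prod_(j < n | j != i) sg j (a j)) * u a.

Definition corr (u : prof -> R) (phi : prof -> R) : R :=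
  \sum_(a : prof) phi a * u a.

Definition Nash (th : tprof) (sg : mixed) : Prop :=
  (forall i, is_mixed (sg i)) /\
  forall i (t : A i -> R), is_mixed t -> ext_dev (th i) sg t <= ext (th i) sg.

(* A product distribution mu = mu_1 x ... x mu_n of finitely supported mu_i:
   mu_i is given by its support s i (duplicate-free list) and weights w i. *)
Definition is_dist (s : 'I_n -> seq Theta) (w : 'I_n -> Theta -> R) : Prop :=
  forall i, [/\ uniq (s i), (forall t, t \in s i -> 0 < w i t),
                (forall t, t \notin s i -> w i t = 0) & \sum_(t <- s i) w i t = 1].

Definition in_supp (s : 'I_n -> seq Theta) (th : tprof) : Prop :=
  forall i, th i \in s i.

(* the finite type of profiles in supp mu *)
Definition SP (s : 'I_n -> seq Theta) := {dffun forall i : 'I_n, seq_sub (s i)}.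
Definition tp (s : 'I_n -> seq Theta) (x : SP s) : tprof := [ffun i => ssval (x i)].

Definition mu (w : 'I_n -> Theta -> R) (th : tprof) : R := \prod_(i < n) w i (th i).
Definition mu_minus (w : 'I_n -> Theta -> R) (i : 'I_n) (th : tprof) : R :=
  \prod_(j < n | j != i) w j (th j).

Definition is_eq (s : 'I_n -> seq Theta) (b : tprof -> mixed) : Prop :=
  forall th, in_supp s th -> Nash th (b th).

Variable pi : 'I_n -> prof -> R.

Definition agg (s : 'I_n -> seq Theta) (w : 'I_n -> Theta -> R) (b : tprof -> mixed)
  : prof -> R :=
  fun a => \sum_(x : SP s) mu w (tp x) * \prod_(i < n) b (tp x) i (a i).

Definition avgfit (s : 'I_n -> seq Theta) (w : 'I_n -> Theta -> R) (b : tprof -> mixed)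
  (i : 'I_n) (thi : Theta) : R :=
  \sum_(x : SP s | ssval (x i) == thi) mu_minus w i (tp x) * ext (pi i) (b (tp x)).

Definition balanced (s : 'I_n -> seq Theta) (w : 'I_n -> Theta -> R)
  (b : tprof -> mixed) : Prop :=
  forall i t t', t \in s i -> t' \in s i -> avgfit s w b i t = avgfit s w b i t'.

(* post-entry distribution: mutant mt j with share eps j for j in J *)
Definition post_s (s : 'I_n -> seq Theta) (J : {set 'I_n}) (mt : 'I_n -> Theta)
  : 'I_n -> seq Theta :=
  fun i => if i \in J then rcons (s i) (mt i) else s i.
Definition post_w (w : 'I_n -> Theta -> R) (J : {set 'I_n}) (mt : 'I_n -> Theta)
  (eps : 'I_n -> R) : 'I_n -> Theta -> R :=
  fun i t => if i \in J then (1 - eps i) * w i t + eps i * (t == mt i)%:R else w i t.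

Definition stable (s : 'I_n -> seq Theta) (w : 'I_n -> Theta -> R)
  (b : tprof -> mixed) : Prop :=
  balanced s w b /\
  forall (J : {set 'I_n}) (mt : 'I_n -> Theta),
    J != set0 -> (forall j, j \in J -> mt j \notin s j) ->
    exists ebar : R, 0 < ebar < 1 /\
      forall eps : 'I_n -> R,
        (forall j, j \in J -> 0 < eps j < 1 /\ eps j < ebar) ->
        forall bt : tprof -> mixed,
          is_eq (post_s s J mt) bt ->
          (forall th, in_supp s th -> forall i a, bt th i a = b th i a) ->
          (exists j, j \in J /\
             forall tj, tj \in s j ->
               avgfit (post_s s J mt) (post_w w J mt eps) bt j (mt j) <
               avgfit (post_s s J mt) (post_w w J mt eps) bt j tj)
          \/ balanced (post_s s J mt) (post_w w J mt eps) bt.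

End Evo.

From HB Require Import structures.
From mathcomp Require Import all_boot all_order all_algebra.
From mathcomp Require Import perm lra.
Set Implicit Arguments. Unset Strict Implicit. Unset Printing Implicit Defensive.
Import Order.TTheory GRing.Theory Num.Theory.
Local Open Scope ring_scope.

(* Mutants whose utility is constant are indifferent between all actions, so the focal
   equilibrium after their entry may let them copy any resident behaviour while still
   agreeing with b on supp mu.  Suppose pi_i(b(a)) < pi_i(b(a')) where a, a' in supp mu
   differ only in the type of player k.  If k = i, a mutant of i that plays as a'_i
   against a_{-i} and as a_i otherwise earns strictly more than the resident a_i.  If
   k <> i, let mutants of i and k copy a_i and a_k, except that the k-mutant plays as a'_k
   when it meets the i-mutant and a elsewhere: the i-mutant now earns strictly more than
   a_i, while by the first case the k-mutant earns exactly as much as a_k.  Either way no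
   entrant is strictly worse than all residents and the post-entry population is not
   balanced, contradicting stability.  Hence pi_i(b(theta)) is constant on supp mu, and
   both identities follow by averaging. *)

Lemma big_dffun_prod (R : comNzRingType) (I : finType) (T_ : I -> finType)
    (F : forall i, T_ i -> R) :
  \sum_(f : {dffun forall i, T_ i}) \prod_i F i (f i) = \prod_i \sum_(y : T_ i) F i y.
Proof.
pose P_ i := [ffun y => F i y].
transitivity (\sum_(t : fprod T_) \prod_(i in I) P_ i (t i)).
  rewrite (reindex (@dffun_of_fprod _ T_)); last first.
    by exists (@fprod_of_dffun _ T_) => f _; rewrite ?dffun_of_fprodK ?fprod_of_dffunK.
  by apply: eq_bigr => t _; apply: eq_bigr => i _; rewrite !ffunE.
rewrite (@big_fprod R 0 1 *%R +%R _ _ P_).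
rewrite -(bigA_distr_big_dep _ (fun i j => untag 0 (P_ i) j)).
apply: eq_bigr => i _; rewrite (big_tag (fun i y => F i y) i).
apply: eq_big => [j|j _]; first by rewrite inE.
by rewrite /untag; case: eqP => // e; rewrite ffunE.
Qed.

Lemma big_seq_sub (R : nmodType) (T : choiceType) (S : seq T) (g : T -> R) :
  uniq S -> \sum_(y : seq_sub S) g (ssval y) = \sum_(v <- S) g v.
Proof.
move=> uS; rewrite -[in RHS](val_seq_sub_enum uS) big_map -big_enum /=.
apply/perm_big/uniq_perm; [exact: enum_uniq | exact: undup_uniq |].
by move=> y; rewrite mem_enum mem_seq_sub_enum.
Qed.

Section Evo.
Variables (R : rcfType) (n : nat) (A : 'I_n -> finType).
Local Notation Th := (Theta R A).
Local Notation TP := (tprof R A).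

Definition cst (c : R) : Th := [ffun _ => c].

Lemma sum_prod_mixed (sg : mixed R A) : (forall k, is_mixed (sg k)) ->
  \sum_(a : prof A) \prod_(k < n) sg k (a k) = 1.
Proof. by move=> sg_mixed; rewrite big_dffun_prod big1 // => k _; case: (sg_mixed k). Qed.

Lemma ext_cst c (sg : mixed R A) : (forall k, is_mixed (sg k)) -> ext (cst c) sg = c.
Proof.
move=> sg_mixed; rewrite /ext; under eq_bigr do rewrite ffunE.
by rewrite -big_distrl /= sum_prod_mixed // mul1r.
Qed.

Lemma ext_dev_cst c (sg : mixed R A) j (t : A j -> R) :
  (forall k, is_mixed (sg k)) -> is_mixed t -> ext_dev (cst c) sg t = c.
Proof.
move=> sg_mixed t_mixed; rewrite /ext_dev; under eq_bigr do rewrite ffunE.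
rewrite -big_distrl /= -[RHS]mul1r; congr (_ * _).
transitivity (\sum_(a : prof A) \prod_(k < n) dfwith sg t k (a k)); last first.
  by apply: sum_prod_mixed => k; case: (dfwithP sg t k).
apply: eq_bigr => a _; rewrite [RHS](bigD1 j) //= dfwith_in; congr (_ * _).
by apply: eq_bigr => k kj; rewrite dfwith_out // eq_sym.
Qed.

Lemma exists_mutants (s : 'I_n -> seq Th) (a0 : prof A) :
  exists c : 'I_n -> R, forall j, cst (c j) \notin s j.
Proof.
exists (fun j => 1 + \sum_(t <- s j) `|t a0|) => j; apply/negP.
set c := 1 + _ => c_in.
have : \sum_(t <- s j) `|t a0| = `|c| + \sum_(t <- rem (cst c) (s j)) `|t a0|.
  by rewrite (big_rem _ c_in) /= ffunE.
have := ler_norm c; have : 0 <= \sum_(t <- rem (cst c) (s j)) `|t a0| by exact: sumr_ge0.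
rewrite /c; lra.
Qed.

Definition upd (th : TP) (j : 'I_n) (v : Th) : TP :=
  [ffun k => if k == j then v else th k].

Lemma updE th j v k : upd th j v k = if k == j then v else th k.
Proof. by rewrite ffunE. Qed.

Lemma upd_upd th j v v' : upd (upd th j v) j v' = upd th j v'.
Proof. by apply/ffunP => k; rewrite !updE; case: eqP. Qed.

Lemma upd_id th j : upd th j (th j) = th.
Proof. by apply/ffunP => k; rewrite updE; case: eqP => // ->. Qed.

Lemma upd_eqE (th th' : TP) j v : th j = th' j -> (upd th j v == upd th' j v) = (th == th').
Proof.
move=> thj; apply/eqP/eqP => [/ffunP eq_upd|->//]; apply/ffunP => l.
by have := eq_upd l; rewrite !updE; case: eqP => [->|].
Qed.

Lemma upd_in_supp s th j v : in_supp s th -> v \in s j -> in_supp s (upd th j v).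
Proof. by move=> th_in v_in k; rewrite updE; case: eqP => [->|]. Qed.

Lemma mu_minus_upd w th j v : mu_minus w j (upd th j v) = mu_minus w j th.
Proof. by apply: eq_bigr => k kj; rewrite updE (negbTE kj). Qed.

Section SupportProfiles.
Variable s : 'I_n -> seq Th.

Lemma tpE (x : SP s) k : tp x k = ssval (x k).
Proof. by rewrite ffunE. Qed.

Lemma tp_in_supp (x : SP s) : in_supp s (tp x).
Proof. by move=> k; rewrite tpE; exact: ssvalP. Qed.

Lemma tp_inj : injective (@tp R n A s).
Proof. by move=> x y eq_xy; apply/ffunP => k; apply: val_inj; rewrite /= -!tpE eq_xy. Qed.

Definition to_SP th (th_in : in_supp s th) : SP s := [ffun k => SeqSub (th_in k)].

Lemma tp_to_SP th (th_in : in_supp s th) : tp (to_SP th_in) = th.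
Proof. by apply/ffunP => k; rewrite tpE ffunE. Qed.

Lemma sum_SP_prod (F : 'I_n -> Th -> R) : (forall k, uniq (s k)) ->
  \sum_(x : SP s) \prod_(k < n) F k (tp x k) = \prod_(k < n) \sum_(t <- s k) F k t.
Proof.
move=> s_uniq; transitivity (\sum_(x : SP s) \prod_(k < n)
    (fun k (y : seq_sub (s k)) => F k (ssval y)) k (x k)).
  by apply: eq_bigr => x _; apply: eq_bigr => k _; rewrite tpE.
rewrite (big_dffun_prod (fun k (y : seq_sub (s k)) => F k (ssval y))).
by apply: eq_bigr => k _; exact: big_seq_sub.
Qed.

Lemma sum_SP_swap (w : 'I_n -> Th -> R) j t m (F : TP -> R) :
  t \in s j -> m \in s j ->
  \sum_(x : SP s | ssval (x j) == m) mu_minus w j (tp x) * F (tp x) =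
  \sum_(x : SP s | ssval (x j) == t) mu_minus w j (tp x) * F (upd (tp x) j m).
Proof.
move=> t_in m_in; pose tt := SeqSub t_in; pose mm := SeqSub m_in.
pose sw (x : SP s) : SP s := finfun (dfwith (fun k => x k) (tperm tt mm (x j))).
have swj x : sw x j = tperm tt mm (x j) by rewrite ffunE dfwith_in.
have swE x : tp (sw x) = upd (tp x) j (ssval (sw x j)).
  apply/ffunP => k; rewrite !tpE updE; case: (k =P j) => [->//|/eqP kj].
  by rewrite ffunE dfwith_out ?tpE // eq_sym.
have swK : involutive sw.
  by move=> x; apply: tp_inj; rewrite !swE upd_upd !swj tpermK -tpE upd_id.
rewrite (reindex_inj (inv_inj swK)); apply: eq_big => [x|x /eqP xj].
  rewrite swj -[m]/(ssval mm) -[t]/(ssval tt) !val_eqE.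
  by rewrite -[X in _ == X](tpermL tt mm) (inj_eq perm_inj).
by rewrite swE mu_minus_upd xj.
Qed.

Lemma avgfit_sub pi w (bt : TP -> mixed R A) j t m : t \in s j -> m \in s j ->
  avgfit pi s w bt j m - avgfit pi s w bt j t =
  \sum_(x : SP s | ssval (x j) == t) mu_minus w j (tp x) *
     (ext (pi j) (bt (upd (tp x) j m)) - ext (pi j) (bt (tp x))).
Proof.
move=> t_in m_in; rewrite /avgfit (sum_SP_swap w (fun th => ext (pi j) (bt th)) t_in m_in).
by rewrite -sumrB; apply: eq_bigr => x _; rewrite mulrBr.
Qed.

Section Distribution.
Variable w : 'I_n -> Th -> R.
Hypothesis s_w_dist : is_dist s w.

Let s_uniq k : uniq (s k). Proof. by case: (s_w_dist k). Qed.

Lemma sum_mu : \sum_(x : SP s) mu w (tp x) = 1.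
Proof.
by rewrite /mu sum_SP_prod // big1 // => k _; case: (s_w_dist k).
Qed.

Lemma sum_mu_minus i t : t \in s i ->
  \sum_(x : SP s | ssval (x i) == t) mu_minus w i (tp x) = 1.
Proof.
move=> t_in; pose F k v := if k == i then (v == t)%:R else w k v.
transitivity (\sum_(x : SP s) \prod_(k < n) F k (tp x k)).
  rewrite big_mkcond; apply: eq_bigr => x _; rewrite (bigD1 i) //= {1}/F eqxx tpE.
  rewrite (eq_bigr (fun k => w k (tp x k))) => [|k ki]; last by rewrite /F (negbTE ki).
  by case: eqP; rewrite ?mul1r ?mul0r.
rewrite sum_SP_prod // (bigD1 i) //= [X in _ * X]big1 => [|k ki].
  rewrite /F eqxx (bigD1_seq t) //= eqxx big1 ?addr0 ?mulr1 // => v.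
  by move/negbTE->.
by rewrite /F (negbTE ki); case: (s_w_dist k).
Qed.

Variables (pi : 'I_n -> prof A -> R) (b : TP -> mixed R A) (i : 'I_n) (f : R).
Hypothesis fitness_const : forall th, in_supp s th -> ext (pi i) (b th) = f.

Lemma avgfit_const t : t \in s i -> avgfit pi s w b i t = f.
Proof.
move=> t_in; rewrite /avgfit (eq_bigr (fun x => mu_minus w i (tp x) * f)).
  by rewrite -big_distrl /= sum_mu_minus // mul1r.
by move=> x _; rewrite fitness_const //; exact: tp_in_supp.
Qed.

Lemma corr_agg_const : corr (pi i) (agg s w b) = f.
Proof.
rewrite /corr /agg; under eq_bigr do rewrite big_distrl /=.
rewrite exchange_big /= (eq_bigr (fun x => mu w (tp x) * f)).
  by rewrite -big_distrl /= sum_mu mul1r.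
move=> x _; rewrite -(fitness_const (tp_in_supp x)) /ext big_distrr /=.
by apply: eq_bigr => a _; rewrite mulrA.
Qed.

End Distribution.
End SupportProfiles.

Section Stability.
Variables (pi : 'I_n -> prof A -> R) (s : 'I_n -> seq Th) (w : 'I_n -> Th -> R)
  (b : TP -> mixed R A).
Hypotheses (s_w_dist : is_dist s w) (b_eq : is_eq s b) (b_stable : stable pi s w b).
Local Notation E j th := (ext (pi j) (b th)).

Lemma mem_post_s (J : {set 'I_n}) mt k v :
  (v \in post_s s J mt k) = (v \in s k) || ((k \in J) && (v == mt k)).
Proof.
by rewrite /post_s; case: ifP => kJ; rewrite ?mem_rcons ?in_cons 1?orbC ?orbF.
Qed.

Section Mutants.
Variable c : 'I_n -> R.
Let mt j := cst (c j).
Hypothesis mt_notin : forall j, mt j \notin s j.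

Lemma post_s_in_supp (J : {set 'I_n}) th : in_supp s th -> in_supp (post_s s J mt) th.
Proof. by move=> th_in l; rewrite mem_post_s th_in. Qed.

Lemma post_s_resident (J : {set 'I_n}) th l :
  in_supp (post_s s J mt) th -> th l != mt l -> th l \in s l.
Proof. by move=> th_in /negbTE ne; have := th_in l; rewrite mem_post_s ne andbF orbF. Qed.

Lemma post_s_outside (J : {set 'I_n}) th l :
  in_supp (post_s s J mt) th -> l \notin J -> th l \in s l.
Proof. by move=> th_in /negbTE lJ; have := th_in l; rewrite mem_post_s lJ orbF. Qed.

Lemma post_w_gt0 (J : {set 'I_n}) (eps : 'I_n -> R) th l :
  (forall j, j \in J -> 0 < eps j < 1) ->
  in_supp (post_s s J mt) th -> 0 < post_w w J mt eps l (th l).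
Proof.
move=> eps_ok th_in; have [_ w_gt0 w_eq0 _] := s_w_dist l.
have := th_in l; rewrite mem_post_s /post_w.
case: ifP => [lJ|_]; last by rewrite orbF; exact: w_gt0.
have /andP [eps_gt0 eps_lt1] := eps_ok l lJ.
case/orP => [/w_gt0 w_pos | /andP [_ /eqP ->]].
  have : 0 <= (th l == mt l)%:R :> R by exact: ler0n.
  nra.
by rewrite w_eq0 ?mt_notin // eqxx mulr0 add0r mulr1.
Qed.

Section Mimic.
Variables (J : {set 'I_n}) (a : TP) (k : 'I_n) (ths : TP) (x : Th).
Hypotheses (a_in : in_supp s a) (x_in : x \in s k).
Hypotheses (ths_k : ths k = mt k) (ths_off : forall l, ths l != mt l -> ths l = a l).

Definition replace_mutants (th : TP) : TP := [ffun l => if th l == mt l then a l else th l].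

(* Every mutant of player l plays as the resident a l, except in the single encounter
   ths, where mutant k plays as the resident x. *)
Definition mimic (th : TP) : TP := if th == ths then upd a k x else replace_mutants th.

Lemma replace_mutants_id (th : TP) : in_supp s th -> replace_mutants th = th.
Proof.
move=> th_in; apply/ffunP => l; rewrite ffunE; case: eqP => // th_mt.
by have := th_in l; rewrite th_mt (negbTE (mt_notin l)).
Qed.

Lemma replace_mutants_in_supp (th : TP) :
  in_supp (post_s s J mt) th -> in_supp s (replace_mutants th).
Proof.
by move=> th_in l; rewrite ffunE; case: eqP => [_|/eqP]; [exact: a_in | exact: post_s_resident].
Qed.

Lemma replace_mutants_upd (th : TP) j :
  replace_mutants (upd th j (mt j)) = upd (replace_mutants th) j (a j).
Proof. by apply/ffunP => l; rewrite !ffunE; case: (l =P j) => [->|]; rewrite ?eqxx. Qed.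

Lemma ths_notin_supp (th : TP) : in_supp s th -> th != ths.
Proof. by move=> th_in; apply: contraTneq (th_in k) => ->; rewrite ths_k mt_notin. Qed.

Lemma mimic_id (th : TP) : in_supp s th -> mimic th = th.
Proof.
by move=> th_in; rewrite /mimic (negbTE (ths_notin_supp th_in)) replace_mutants_id.
Qed.

Lemma mimic_in_supp (th : TP) : in_supp (post_s s J mt) th -> in_supp s (mimic th).
Proof.
rewrite /mimic; case: eqP => _ th_in; last exact: replace_mutants_in_supp.
exact: upd_in_supp.
Qed.

Lemma mimic_resident (th : TP) l : th l \in s l -> mimic th l = th l.
Proof.
move=> th_l_in; rewrite /mimic; case: eqP => [eq_th|_].
  have lk : l != k by apply: contraTneq th_l_in => ->; rewrite eq_th ths_k mt_notin.
  rewrite updE (negbTE lk) eq_th ths_off //.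
  by rewrite -eq_th; apply: contraTneq th_l_in => ->; rewrite mt_notin.
rewrite ffunE; case: eqP => // th_mt.
by move: th_l_in; rewrite th_mt (negbTE (mt_notin l)).
Qed.

Lemma mimic_Nash : is_eq (post_s s J mt) (fun th => b (mimic th)).
Proof.
move=> th th_in; have [mixed nash] := b_eq (mimic_in_supp th_in).
split=> // j t t_mixed; have [th_j_in | th_j_out] := boolP (th j \in s j).
  by rewrite -(mimic_resident th_j_in); exact: nash.
have -> : th j = mt j.
  by move: (th_in j); rewrite mem_post_s (negbTE th_j_out) => /andP [_ /eqP].
by rewrite ext_dev_cst // ext_cst.
Qed.

Lemma mimic_upd_k (th : TP) : mimic (upd th k (mt k)) =
  upd (replace_mutants th) k (if upd th k (mt k) == ths then x else a k).
Proof.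
rewrite /mimic replace_mutants_upd; case: eqP => // /ffunP eq_th.
apply/ffunP => l; rewrite !updE; case: (l =P k) => // /eqP lk.
have := eq_th l; rewrite updE (negbTE lk) ffunE => ->.
by case: eqP => // /eqP /ths_off.
Qed.

(* Advantage of the j-mutant over the resident type th j against the opponents th_{-j}. *)
Definition gain j th := E j (mimic (upd th j (mt j))) - E j (mimic th).

Lemma stable_gain_eq0 i th0 : i \in J ->
  (forall th, in_supp (post_s s J mt) th -> th i = a i -> 0 <= gain i th) ->
  (forall j, j \in J -> j != i ->
     forall th, in_supp (post_s s J mt) th -> th j = a j -> gain j th = 0) ->
  in_supp (post_s s J mt) th0 -> th0 i = a i -> gain i th0 = 0.
Proof.
move=> iJ gain_ge0 gain_eq0 th0_in th0_i.
apply/eqP; rewrite eq_le gain_ge0 // andbT leNgt; apply/negP => gain_pos.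
have J0 : J != set0 by apply/set0Pn; exists i.
have [ebar [/andP [ebar_gt0 ebar_lt1] stab]] := b_stable.2 J mt J0 (fun j _ => mt_notin j).
pose eps (_ : 'I_n) := ebar / 2.
have eps_ok j : j \in J -> 0 < eps j < 1 /\ eps j < ebar.
  by move=> _; rewrite /eps; split; [apply/andP; split|]; lra.
have eps_in j : j \in J -> 0 < eps j < 1 by case/eps_ok.
pose s' := post_s s J mt; pose w' := post_w w J mt eps.
have res_in j v : v \in s j -> v \in s' j by rewrite mem_post_s => ->.
have mt_in j : j \in J -> mt j \in s' j by rewrite mem_post_s eqxx => ->; rewrite orbT.
have mu_minus_ge0 th : in_supp s' th -> 0 <= mu_minus w' i th.
  by move=> th_in; apply: prodr_ge0 => l _; apply/ltW/post_w_gt0.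
pose F j := avgfit pi s' w' (fun th => b (mimic th)) j.
have F_i : F i (a i) < F i (mt i).
  rewrite -subr_gt0 /F avgfit_sub ?mt_in ?res_in //.
  rewrite (bigD1 (to_SP th0_in)) /=; last by rewrite -tpE tp_to_SP th0_i.
  rewrite tp_to_SP ltr_wpDr ?mulr_gt0 //.
    apply: sumr_ge0 => y /andP [/eqP y_i _].
    by rewrite mulr_ge0 ?mu_minus_ge0 ?gain_ge0 ?tpE //; exact: tp_in_supp.
  by apply: prodr_gt0 => l _; exact: post_w_gt0.
have F_j j : j \in J -> j != i -> F j (mt j) = F j (a j).
  move=> jJ ji; apply/eqP; rewrite -subr_eq0 /F avgfit_sub ?mt_in ?res_in //.
  apply/eqP/big1 => y /eqP y_j.
  have := gain_eq0 j jJ ji (tp y) (tp_in_supp y); rewrite tpE y_j /gain => -> //.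
  by rewrite mulr0.
case: (stab eps eps_ok _ mimic_Nash) => [th th_in l y|[j [jJ lt_j]]|bal].
- by rewrite mimic_id.
- have := lt_j (a j) (a_in j); have [->|ji] := eqVneq j i.
    by move: F_i; rewrite /F; lra.
  by rewrite -/(F j (mt j)) F_j // ltxx.
- have := bal i (mt i) (a i) (mt_in i iJ) (res_in _ _ (a_in i)).
  by move: F_i; rewrite /F; lra.
Qed.

End Mimic.

Lemma own_type_no_gain i (a : TP) t : in_supp s a -> t \in s i -> E i (upd a i t) <= E i a.
Proof.
move=> a_in t_in; rewrite leNgt; apply/negP => gain_pos.
pose ths := upd a i (mt i).
have ths_i : ths i = mt i by rewrite updE eqxx.
have ths_off l : ths l != mt l -> ths l = a l.
  by rewrite /ths updE; case: (l =P i) => [->|]; rewrite ?eqxx.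
have gainE th : in_supp (post_s s [set i] mt) th -> th i = a i ->
    gain a i ths t i th = if th == a then E i (upd a i t) - E i a else 0.
  move=> th_in th_i; have th_s : in_supp s th.
    move=> l; have [->|li] := eqVneq l i; first by rewrite th_i.
    by apply: post_s_outside th_in _; rewrite in_set1.
  rewrite /gain mimic_upd_k // replace_mutants_id // mimic_id // upd_eqE //.
  by case: eqP => [->|_]; last by rewrite -th_i upd_id subrr.
have : gain a i ths t i a = 0.
  apply: (stable_gain_eq0 a_in t_in ths_i ths_off (set11 i)) => // [th th_in th_i|j|].
  - by rewrite gainE //; case: eqP => // _; move: gain_pos; lra.
  - by rewrite in_set1 => /eqP ->; rewrite eqxx.
  - exact: post_s_in_supp.
by rewrite gainE ?eqxx //; [move: gain_pos; lra | exact: post_s_in_supp].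
Qed.

Lemma own_type_irrelevant i (a : TP) t :
  in_supp s a -> t \in s i -> E i (upd a i t) = E i a.
Proof.
move=> a_in t_in; apply/eqP; rewrite eq_le own_type_no_gain //=.
by have := own_type_no_gain (upd_in_supp a_in t_in) (a_in i); rewrite upd_upd upd_id.
Qed.

Lemma other_type_no_gain i k (a : TP) x : i != k -> in_supp s a -> x \in s k ->
  E i (upd a k x) <= E i a.
Proof.
move=> ik a_in x_in; rewrite leNgt; apply/negP => gain_pos.
pose J := [set i; k]; pose th0 := upd a k (mt k); pose ths := upd th0 i (mt i).
have ths_k : ths k = mt k by rewrite !updE eqxx eq_sym (negbTE ik).
have ths_off l : ths l != mt l -> ths l = a l.
  rewrite !updE; case: (l =P i) => [->|_]; first by rewrite eqxx.
  by case: (l =P k) => [->|]; rewrite ?eqxx.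
have th0_i : th0 i = a i by rewrite updE (negbTE ik).
have th0_in : in_supp (post_s s J mt) th0.
  by apply: upd_in_supp; [exact: post_s_in_supp | rewrite mem_post_s !inE !eqxx !orbT].
have mimic_off th : th != ths -> mimic a k ths x th = replace_mutants a th.
  by rewrite /mimic => /negbTE ->.
have gain_i th : in_supp (post_s s J mt) th -> th i = a i ->
    gain a k ths x i th = if th == th0 then E i (upd a k x) - E i a else 0.
  move=> th_in th_i; have th_i_res : th i \in s i by rewrite th_i.
  rewrite /gain (mimic_off th); last first.
    by apply: contraTneq th_i_res => ->; rewrite updE eqxx mt_notin.
  rewrite /mimic upd_eqE; last by rewrite th_i.
  case: eqP => [->|_].
    by rewrite replace_mutants_upd replace_mutants_id // upd_id.
  rewrite replace_mutants_upd -[X in upd _ i X]th_i.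
  have -> : th i = replace_mutants a th i by rewrite ffunE; case: eqP => // <-.
  by rewrite upd_id subrr.
have : gain a k ths x i th0 = 0.
  apply: (stable_gain_eq0 a_in x_in ths_k ths_off (_ : i \in J)) => //.
  - by rewrite !inE eqxx.
  - by move=> th th_in th_i; rewrite gain_i //; case: eqP => // _; move: gain_pos; lra.
  move=> j; rewrite !inE => /orP [/eqP ->|/eqP ->]; first by rewrite eqxx.
  move=> _ th th_in th_k; have th_k_res : th k \in s k by rewrite th_k.
  rewrite /gain mimic_upd_k // (mimic_off th); last first.
    by apply: contraTneq th_k_res => ->; rewrite ths_k mt_notin.
  rewrite own_type_irrelevant ?subrr //; first exact: replace_mutants_in_supp th_in.
  by case: ifP.
by rewrite gain_i ?eqxx //; move: gain_pos; lra.
Qed.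

Lemma fitness_upd i k (a : TP) x : in_supp s a -> x \in s k -> E i (upd a k x) = E i a.
Proof.
move=> a_in x_in; have [->|ik] := eqVneq i k; first exact: own_type_irrelevant.
apply/eqP; rewrite eq_le other_type_no_gain //=.
by have := other_type_no_gain ik (upd_in_supp a_in x_in) (a_in k); rewrite upd_upd upd_id.
Qed.

Lemma fitness_eq_mutants i th th' : in_supp s th -> in_supp s th' -> E i th = E i th'.
Proof.
move=> th_in th'_in.
pose mix m : TP := [ffun l : 'I_n => if (l < m)%N then th' l else th l].
have mix_in m : in_supp s (mix m) by move=> l; rewrite ffunE; case: ifP.
have mixS m (mn : (m < n)%N) : mix m.+1 = upd (mix m) (Ordinal mn) (th' (Ordinal mn)).
  apply/ffunP => l; rewrite updE !ffunE ltnS leq_eqVlt.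
  rewrite -[nat_of_ord l == m]/(l == Ordinal mn).
  by case: eqP => [->|].
have mix0 : mix 0 = th by apply/ffunP => l; rewrite ffunE.
have mixn : mix n = th' by apply/ffunP => l; rewrite ffunE ltn_ord.
suff mix_eq m : (m <= n)%N -> E i (mix m) = E i th by rewrite -mixn mix_eq.
elim: m => [_|m IHm mn]; first by rewrite mix0.
by rewrite mixS fitness_upd // IHm // ltnW.
Qed.

End Mutants.

Lemma fitness_const i th th' : in_supp s th -> in_supp s th' -> E i th = E i th'.
Proof.
(* Without action profiles all types coincide, so no mutant exists, but every [ext] is 0. *)
case: (pickP (fun _ : prof A => true)) => [a0 _|prof0]; last by rewrite /ext !big_pred0.
have [c mt_notin] := exists_mutants s a0.
exact: fitness_eq_mutants.
Qed.

End Stability.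

End Evo.

Unset Implicit Arguments.
Theorem mainTheorem3 (R : rcfType) (n : nat) (A : 'I_n -> finType)
  (pi : 'I_n -> prof A -> R)
  (s : 'I_n -> seq (Theta R A)) (w : 'I_n -> Theta R A -> R)
  (b : tprof R A -> mixed R A) :
  is_dist s w -> is_eq s b -> stable pi s w b ->
  forall (i : 'I_n) (thbar : Theta R A) (th : tprof R A),
    thbar \in s i -> in_supp s th ->
    avgfit pi s w b i thbar = ext (pi i) (b th) /\
    ext (pi i) (b th) = corr (pi i) (agg s w b).
Proof.
move=> s_w_dist b_eq b_stable i thbar th thbar_in th_in.
have fitness_th th' : in_supp s th' -> ext (pi i) (b th') = ext (pi i) (b th).
  by move=> th'_in; exact: (fitness_const s_w_dist b_eq b_stable i th'_in th_in).
by split; [exact: avgfit_const | symmetry; exact: corr_agg_const].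
Qed.
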